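(* Let $f\in C^1(\mathbb{R}^N)$ have a gradient satisfying $\|\nabla f(x)-\nabla f(y)\|\le c\|x-y\|$ for all $x,y$. Suppose the set $S=\{x:\nabla f(x)=0\}$ is bounded and has only finitely many connected components $S_1,\dots,S_m$, that $f$ takes a constant value $f_i$ on each $S_i$, and that there exists $\epsilon_1'>0$ such that for every $i=1,\dots,m$ and every $x$ with $0<d(x,S_i)<\epsilon_1'$ we have $f(x)\neq f_i$. Then there exists $\epsilon_0'>0$ such that for every $i=1,\dots,m$ and every $x$ with $d(x,S_i)<\epsilon_0'$, $$\|\nabla f(x)\|^2\le 2c\,|f(x)-f_i|.$$
   Context: $d(x,A)=\inf\{\|x-y\|:y\in A\}$, with $\|\cdot\|$ the Euclidean norm. *)

(* R^N is modelled as row vectors 'rV[R]_N, R : realType. *)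
From HB Require Import structures.
From mathcomp Require Import all_boot all_order all_algebra.
From mathcomp Require Import all_classical all_reals all_analysis.
Set Implicit Arguments. Unset Strict Implicit. Unset Printing Implicit Defensive.
Import Order.TTheory GRing.Theory Num.Theory.
Import numFieldNormedType.Exports.
Local Open Scope classical_set_scope.
Local Open Scope ring_scope.

Definition edot {R : realType} {N : nat} (u v : 'rV[R]_N) : R :=
  \sum_(i < N) u 0 i * v 0 i.

Definition enorm {R : realType} {N : nat} (v : 'rV[R]_N) : R :=
  Num.sqrt (edot v v).

Definition eucl_dist {R : realType} {N : nat} (x : 'rV[R]_N) (A : set 'rV[R]_N) : R :=
  inf [set enorm (x - y) | y in A].

Definition is_gradient {R : realType} {N : nat}
  (f : 'rV[R]_N -> R) (g : 'rV[R]_N -> 'rV[R]_N) : Prop :=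
  forall x, differentiable f x /\ forall h, 'd f x h = edot (g x) h.

(* Let G = ||grad f(x)|| and d = d(x, S_i); Lipschitz continuity of the gradient, which vanishes
   on S_i, gives G <= c d.  If G^2 > 2c|f x - f_i|, the descent lemma
   |f(x + v) - f x - <grad f(x), v>| <= c/2 ||v||^2 shows that t |-> f(x + t grad f(x)) lies on
   opposite sides of f_i at t = 1/c and t = -1/c, so it equals f_i at some |t| < 1/c.  That point w
   satisfies d(w, S_i) <= |t| G + d < 2d < eps1, so isolation of the level forces d(w, S_i) = 0,
   hence grad f(w) = 0, and then G = ||grad f(x) - grad f(w)|| <= c |t| G < G. *)

From HB Require Import structures.
From mathcomp Require Import all_boot all_order all_algebra.
From mathcomp Require Import all_classical all_reals all_analysis.
From mathcomp Require Import ring lra.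
Set Implicit Arguments. Unset Strict Implicit.
Import Order.TTheory GRing.Theory Num.Theory.
Import numFieldNormedType.Exports.
Local Open Scope classical_set_scope.
Local Open Scope ring_scope.

Section Euclidean.
Variables (R : realType) (N : nat).
Implicit Types (u v w : 'rV[R]_N).

Lemma edotC u v : edot u v = edot v u.
Proof. by apply: eq_bigr => i _; rewrite mulrC. Qed.

Lemma edotDl u v w : edot (u + w) v = edot u v + edot w v.
Proof. by rewrite /edot -big_split; apply: eq_bigr => i _; rewrite !mxE mulrDl. Qed.

Lemma edotZl (a : R) u v : edot (a *: u) v = a * edot u v.
Proof. by rewrite /edot mulr_sumr; apply: eq_bigr => i _; rewrite !mxE mulrA. Qed.

Lemma edotNl u v : edot (- u) v = - edot u v.
Proof. by rewrite -scaleN1r edotZl mulN1r. Qed.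

Lemma edotBl u v w : edot (u - w) v = edot u v - edot w v.
Proof. by rewrite edotDl edotNl. Qed.

Lemma edotDr u v w : edot v (u + w) = edot v u + edot v w.
Proof. by rewrite !(edotC v) edotDl. Qed.

Lemma edotZr (a : R) u v : edot v (a *: u) = a * edot v u.
Proof. by rewrite !(edotC v) edotZl. Qed.

Lemma edotBr u v w : edot v (u - w) = edot v u - edot v w.
Proof. by rewrite !(edotC v) edotBl. Qed.

Lemma edot_ge0 u : 0 <= edot u u.
Proof. by apply: sumr_ge0 => i _; rewrite -expr2 sqr_ge0. Qed.

Lemma edot_eq0 u : (edot u u == 0) = (u == 0).
Proof.
apply/idP/eqP => [|->]; last by rewrite /edot big1 // => i _; rewrite mxE mul0r.
rewrite psumr_eq0 => [/allP u0|i _]; last by rewrite -expr2 sqr_ge0.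
apply/rowP => i; have /implyP := u0 i (mem_index_enum _).
by rewrite mxE mulf_eq0 orbb => /(_ isT)/eqP.
Qed.

Lemma enorm_ge0 u : 0 <= enorm u.
Proof. exact: sqrtr_ge0. Qed.

Lemma enorm_eq0 u : (enorm u == 0) = (u == 0).
Proof. by rewrite sqrtr_eq0 -edot_eq0 eq_le edot_ge0 andbT. Qed.

Lemma enorm0 : enorm (0 : 'rV[R]_N) = 0.
Proof. by apply/eqP; rewrite enorm_eq0. Qed.

Lemma enorm_sqr u : enorm u ^+ 2 = edot u u.
Proof. by rewrite sqr_sqrtr // edot_ge0. Qed.

Lemma enormZ (a : R) u : enorm (a *: u) = `|a| * enorm u.
Proof. by rewrite /enorm edotZl edotZr mulrA -expr2 sqrtrM ?sqr_ge0 // sqrtr_sqr. Qed.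

Lemma enormN u : enorm (- u) = enorm u.
Proof. by rewrite -scaleN1r enormZ normrN normr1 mul1r. Qed.

Lemma enorm_distC u v : enorm (u - v) = enorm (v - u).
Proof. by rewrite -enormN opprB. Qed.

Lemma cauchy_schwarz u v : edot u v <= enorm u * enorm v.
Proof.
have [->|u0] := eqVneq u 0.
  by rewrite /edot big1 ?mulr_ge0 ?enorm_ge0 // => i _; rewrite mxE mul0r.
have [->|v0] := eqVneq v 0.
  by rewrite /edot big1 ?mulr_ge0 ?enorm_ge0 // => i _; rewrite mxE mulr0.
have ab_gt0 : 0 < enorm u * enorm v.
  by rewrite mulr_gt0 // lt_def enorm_eq0 ?u0 ?v0 enorm_ge0.
have := edot_ge0 (enorm v *: u - enorm u *: v).
rewrite !edotBl !edotBr !edotZl !edotZr -!enorm_sqr (edotC v u).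
nra.
Qed.

Lemma enormD u v : enorm (u + v) <= enorm u + enorm v.
Proof.
rewrite -ler_sqr ?nnegrE ?addr_ge0 ?enorm_ge0 //.
rewrite enorm_sqr edotDl !edotDr (edotC v u) -!enorm_sqr.
have := cauchy_schwarz u v; nra.
Qed.

End Euclidean.

Section Distance.
Variables (R : realType) (N : nat).
Implicit Types (x y z : 'rV[R]_N) (A : set 'rV[R]_N).

Lemma eucl_dist_le x A z : A z -> eucl_dist x A <= enorm (x - z).
Proof.
move=> Az; apply: ge_inf; last by exists z.
by exists 0 => _ [y _ <-]; apply: enorm_ge0.
Qed.

Lemma eucl_dist_ge x A (a : R) : A !=set0 ->
  (forall z, A z -> a <= enorm (x - z)) -> a <= eucl_dist x A.
Proof.
move=> [z Az] xA; apply: lb_le_inf; first by exists (enorm (x - z)), z.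
by move=> _ [y Ay <-]; apply: xA.
Qed.

Lemma eucl_dist_ge0 x A : A !=set0 -> 0 <= eucl_dist x A.
Proof. by move=> A0; apply: eucl_dist_ge => // z _; apply: enorm_ge0. Qed.

Lemma eucl_distDl x y A : A !=set0 ->
  eucl_dist y A <= enorm (y - x) + eucl_dist x A.
Proof.
move=> A0; rewrite -lerBlDl; apply: eucl_dist_ge => // z Az.
rewrite lerBlDl; apply: le_trans (eucl_dist_le y Az) _.
by rewrite -(subrKA x) enormD.
Qed.

End Distance.

Section Gradient.
Variables (R : realType) (N : nat).
Implicit Types (f : 'rV[R]_N -> R) (g : 'rV[R]_N -> 'rV[R]_N) (x v : 'rV[R]_N).

Lemma is_gradientN f g : is_gradient f g -> is_gradient (- f) (- g).
Proof.
move=> fg x; have [fx dfx] := fg x; split; first exact: differentiableN.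
by move=> h; rewrite diffN // fctE dfx -edotNl.
Qed.

Lemma is_derive_line f g x v (t : R) : is_gradient f g ->
  is_derive t 1 (fun s : R => f (x + s *: v)) (edot (g (x + t *: v)) v).
Proof.
move=> fg; have [dft dfE] := fg (x + t *: v).
have dfl : differentiable (f \o fun s : R => x + s *: v) t.
  exact: differentiable_comp.
apply: DeriveDef; first exact/derivable1_diffP.
by rewrite deriveE // diff_comp //= dfE diff_val add0r /= scale1r.
Qed.

Definition eucl_lipschitz g (c : R) := forall x y, enorm (g x - g y) <= c * enorm (x - y).

Lemma descent_upper f g c x v : is_gradient f g -> eucl_lipschitz g c ->
  f (x + v) - f x - edot (g x) v <= c / 2 * enorm v ^+ 2.
Proof.
move=> fg gL; set a := edot (g x) v; set e := c / 2 * enorm v ^+ 2.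
pose k : R -> R := (fun t : R => f (x + t *: v)) - a \*: id - e \*: id ^+ 2.
have Dk (t : R) : is_derive t (1 : R) k (edot (g (x + t *: v)) v - a - e * (2 * t)).
  have := is_derive_line x v t fg.
  by rewrite /k => Dl; apply: is_derive_eq; rewrite /= expr1 !scaler1.
have kC : {within `[0, 1], continuous k}.
  by apply: derivable_within_continuous => t _; exact: ex_derive.
have [t /[!in_itv]/= /andP[t_gt0 _]] := MVT ltr01 (fun t _ => Dk t) kC.
have kE (s : R) : k s = f (x + s *: v) - a * s - e * s ^+ 2 by [].
rewrite !kE scale1r scale0r addr0 expr1n expr0n /=.
suff slope : edot (g (x + t *: v)) v - a <= e * (2 * t) by lra.
have := gL (x + t *: v) x; rewrite addrAC subrr add0r enormZ gtr0_norm // => gLt.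
have -> : e * (2 * t) = c * (t * enorm v) * enorm v by rewrite /e; field.
rewrite /a -edotBl; apply: le_trans (cauchy_schwarz _ _) _.
by apply: ler_wpM2r; first exact: enorm_ge0.
Qed.

Lemma eucl_lipschitzN g c : eucl_lipschitz g c -> eucl_lipschitz (- g) c.
Proof. by move=> gL x y; rewrite !fctE -opprD enormN. Qed.

Lemma descent f g c x v : is_gradient f g -> eucl_lipschitz g c ->
  `|f (x + v) - f x - edot (g x) v| <= c / 2 * enorm v ^+ 2.
Proof.
move=> fg gL; apply/ler_normlP; split; last exact: descent_upper.
have := descent_upper x v (is_gradientN fg) (eucl_lipschitzN gL).
by rewrite !fctE edotNl; lra.
Qed.

Lemma enorm_le_eucl_dist g c (A : set 'rV[R]_N) w :
  eucl_lipschitz g c -> 0 <= c -> A !=set0 -> (forall z, A z -> g z = 0) ->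
  enorm (g w) <= c * eucl_dist w A.
Proof.
move=> gL c_ge0 A0 gA; have gwz z : A z -> enorm (g w) <= c * enorm (w - z).
  by move=> Az; rewrite -[g w]subr0 -(gA z Az); apply: gL.
have [c0|c_neq0] := eqVneq c 0; first by case: A0 => z /gwz; rewrite c0 !mul0r.
have c_gt0 : 0 < c by rewrite lt_def c_neq0.
by rewrite -ler_pdivrMl //; apply: eucl_dist_ge => // z /gwz; rewrite ler_pdivrMl.
Qed.

End Gradient.

Section NearCriticalSet.
Variables (R : realType) (N : nat) (f : 'rV[R]_N -> R) (g : 'rV[R]_N -> 'rV[R]_N) (c : R).
Hypotheses (fg : is_gradient f g) (gL : eucl_lipschitz g c).

Lemma level_crossing x a : 0 < c -> 2 * c * `|f x - a| < enorm (g x) ^+ 2 ->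
  exists2 t, `|t| < c^-1 & f (x + t *: g x) = a.
Proof.
move=> c_gt0 hlt; set s := c^-1; set G := enorm (g x).
have s_gt0 : 0 < s by rewrite invr_gt0.
have fxa : `|f x - a| < s * G ^+ 2 / 2.
  have -> : s * G ^+ 2 / 2 = G ^+ 2 / (2 * c) by rewrite /s; field; rewrite lt0r_neq0.
  by rewrite ltr_pdivlMr ?mulr_gt0 // mulrC.
have step t : `|t| = s -> `|f (x + t *: g x) - f x - t * G ^+ 2| <= s * G ^+ 2 / 2.
  move=> ts; have := descent x (t *: g x) fg gL.
  rewrite edotZr -enorm_sqr enormZ exprMn ts.
  by have -> : c / 2 * (s ^+ 2 * G ^+ 2) = s * G ^+ 2 / 2 by rewrite /s; field; rewrite lt0r_neq0.
have /ler_normlP[up _] := step s (gtr0_norm s_gt0).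
have /ler_normlP[_ down] := step (- s) ltac:(by rewrite normrN gtr0_norm).
have [fa1 fa2] := ler_normlP _ _ (lexx `|f x - a|).
pose phi t := f (x + t *: g x).
have phiC : {within `[- s, s], continuous phi}.
  apply: derivable_within_continuous => t _.
  have Dphi := is_derive_line x (g x) t fg; exact: ex_derive.
have phi_s : a < phi s by rewrite /phi; lra.
have phi_Ns : phi (- s) < a by rewrite /phi; lra.
have [t /[!in_itv]/= /andP[t_geNs t_les] phi_t] : exists2 t, t \in `[- s, s] & phi t = a.
  apply: IVT => //; first lra.
  by rewrite ge_min le_max (ltW phi_Ns) (ltW phi_s) orbT.
exists t => //; rewrite ltr_norml !lt_neqAle t_geNs t_les !andbT eq_sym.
by apply/andP; split; apply/eqP => ts; [move: phi_Ns | move: phi_s]; rewrite -ts phi_t ltxx.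
Qed.

Lemma enorm_grad_sqr_le (A : set 'rV[R]_N) a eps x : 0 <= c ->
  A !=set0 -> (forall z, A z -> g z = 0) ->
  (forall w, 0 < eucl_dist w A < eps -> f w != a) ->
  eucl_dist x A < eps / 2 -> enorm (g x) ^+ 2 <= 2 * c * `|f x - a|.
Proof.
move=> c_ge0 A0 gA f_ne_a dx; set G := enorm (g x); set d := eucl_dist x A.
have d_ge0 : 0 <= d := eucl_dist_ge0 x A0.
have Gd : G <= c * d := enorm_le_eucl_dist x gL c_ge0 A0 gA.
rewrite leNgt; apply/negP => hlt.
have G_gt0 : 0 < G.
  rewrite lt_def enorm_ge0 andbT; apply: contraTneq hlt => ->.
  by rewrite expr0n -leNgt !mulr_ge0.
have c_gt0 : 0 < c by nra.
have [t t_lt fw] := level_crossing c_gt0 hlt; set w := x + t *: g x in fw.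
have ct_lt1 : c * `|t| < 1 by rewrite -(mulfV (lt0r_neq0 c_gt0)) ltr_pM2l.
have wx : enorm (w - x) = `|t| * G by rewrite /w addrAC subrr add0r enormZ.
have tG : `|t| * G <= d.
  apply: le_trans (ler_wpM2l (normr_ge0 t) Gd) _.
  by rewrite mulrA [_ * c]mulrC ler_piMl // ltW.
have dw : eucl_dist w A < eps by have := eucl_distDl x w A0; rewrite wx; lra.
have dw0 : eucl_dist w A = 0.
  apply/eqP; rewrite eq_le eucl_dist_ge0 // andbT leNgt; apply/negP => dw_gt0.
  by have := f_ne_a w; rewrite dw_gt0 dw fw eqxx => /(_ isT).
have gw : g w = 0.
  apply/eqP; rewrite -enorm_eq0 eq_le enorm_ge0 andbT.
  by have := enorm_le_eucl_dist w gL c_ge0 A0 gA; rewrite dw0 mulr0.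
have := gL x w; rewrite gw subr0 -/G enorm_distC wx mulrA; apply/negP; rewrite -ltNge.
by rewrite -[X in _ < X]mul1r ltr_pM2r.
Qed.

End NearCriticalSet.

Theorem lemma4 (R : realType) (N : nat) (f : 'rV[R]_N -> R)
  (g : 'rV[R]_N -> 'rV[R]_N) (c : R)
  (m : nat) (S : 'I_m -> set 'rV[R]_N) (fv : 'I_m -> R) :
  (* f is C^1 with gradient g *)
  is_gradient f g -> continuous g ->
  (* the gradient is c-Lipschitz *)
  (forall x y, enorm (g x - g y) <= c * enorm (x - y)) ->
  (* the critical set is bounded *)
  (exists M : R, forall x, g x = 0 -> enorm x <= M) ->
  (* S_1, ..., S_m are exactly the (distinct) connected components of {x | g x = 0} *)
  (forall i, exists2 x, g x = 0 & S i = connected_component [set y | g y = 0] x) ->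
  (forall x, g x = 0 -> exists i, S i x) ->
  injective S ->
  (* f takes the constant value fv i on S i *)
  (forall i x, S i x -> f x = fv i) ->
  (exists2 eps1 : R, 0 < eps1 &
     forall i x, 0 < eucl_dist x (S i) < eps1 -> f x != fv i) ->
  exists2 eps0 : R, 0 < eps0 &
    forall i x, eucl_dist x (S i) < eps0 ->
      enorm (g x) ^+ 2 <= 2 * c * `|f x - fv i|.
Proof.
move=> fg _ gL _ Scomp _ _ Sval [eps1 eps1_gt0 f_ne_fv].
have Sne i : S i !=set0.
  by have [z gz ->] := Scomp i; exists z; apply: connected_component_refl.
have gS i z : S i z -> g z = 0.
  by have [z0 _ ->] := Scomp i; apply: connected_component_sub.
have [c_lt0|c_ge0] := ltP c 0.
  (* a negative Lipschitz constant is only possible on a one-point space *)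
  have all_eq (x y : 'rV[R]_N) : x = y.
    apply/eqP; rewrite -subr_eq0 -enorm_eq0 eq_le enorm_ge0 andbT.
    by have := gL x y; have := enorm_ge0 (g x - g y); have := enorm_ge0 (x - y); nra.
  exists 1 => // i x _; have [z Sz] := Sne i.
  by rewrite (all_eq x z) (gS i z Sz) (Sval i z Sz) subrr enorm0 normr0 mulr0 expr0n.
exists (eps1 / 2) => [|i x]; first by rewrite divr_gt0.
exact: (enorm_grad_sqr_le fg gL c_ge0 (Sne i) (gS i) (f_ne_fv i)).
Qed.
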